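(* Let $S\subset\mathbb{P}^6$ be the surface defined by $$x_1^2-x_2x_4=x_1x_5-x_3x_4=x_1x_3-x_2x_5=x_1x_6-x_3x_5=x_2x_6-x_3^2=x_4x_6-x_5^2=0,$$ $$x_1^2+x_1x_4+x_5x_7=x_1x_2+x_1^2+x_3x_7=x_1x_3+x_1x_5+x_6x_7=0,$$ let $U\subset S$ be the complement in $S$ of the three lines $x_1=x_2=x_3=x_5=x_6=0$, $x_1=x_3=x_4=x_5=x_6=0$, and $x_3=x_5=x_6=x_1+x_4=x_1+x_2=0$, and let $N_U(B)=\#\{x\in U(\mathbb{Q}):H(x)\leq B\}$. Let $M(B)$ denote the number of $\mathbf{x}\in\mathbb{Z}^7$ such that $$x_1^2-x_2x_4=x_1x_5-x_3x_4=x_1x_3-x_2x_5=x_1x_6-x_3x_5=x_2x_6-x_3^2=x_4x_6-x_5^2=0,$$ $$x_1^2-x_1x_4+x_5x_7=x_1^2-x_1x_2-x_3x_7=x_1x_3-x_1x_5+x_6x_7=0,$$ with $\gcd(x_1,\dots,x_7)=1$, $0<|x_1|\leq B$, $0<x_2,x_3,x_4\leq B$, $0<|x_5|\leq B$, $0<x_6\leq B$ and $|x_7|\leq B$. Then $$N_U(B)=2M(B)+O(B).$$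
   Context: For $x\in\mathbb{P}^{6}(\mathbb{Q})$ written as $x=[\mathbf{x}]$ with $\mathbf{x}\in\mathbb{Z}^7$ primitive, $H(x)=\max_i|x_i|$. The $O$-constant is absolute; $B\geq 1$. *)

From Stdlib Require Import ZArith Reals List Bool.
Import ListNotations.
Open Scope bool_scope.
Open Scope Z_scope.

Definition zrange (K : Z) : list Z :=
  map (fun i => Z.of_nat i - K) (seq 0 (Z.to_nat (2 * K + 1))).

Definition sumZ (K : Z) (f : Z -> nat) : nat :=
  fold_right (fun z acc => (f z + acc)%nat) 0%nat (zrange K).

Definition count7 (K : Z) (P : Z -> Z -> Z -> Z -> Z -> Z -> Z -> bool) : nat :=
  sumZ K (fun x1 => sumZ K (fun x2 => sumZ K (fun x3 => sumZ K (fun x4 =>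
  sumZ K (fun x5 => sumZ K (fun x6 => sumZ K (fun x7 =>
    if P x1 x2 x3 x4 x5 x6 x7 then 1%nat else 0%nat))))))).

Definition primitive7 (x1 x2 x3 x4 x5 x6 x7 : Z) : bool :=
  Z.gcd x1 (Z.gcd x2 (Z.gcd x3 (Z.gcd x4 (Z.gcd x5 (Z.gcd x6 x7))))) =? 1.

(* The first nonzero entry of the list is positive: this picks one of the two
   primitive representatives +x, -x of a rational point of P^6. *)
Fixpoint first_nonzero_pos (l : list Z) : bool :=
  match l with
  | [] => false
  | z :: l' => if z =? 0 then first_nonzero_pos l' else 0 <? z
  end.

Definition on_S (x1 x2 x3 x4 x5 x6 x7 : Z) : bool :=
  (x1^2 - x2*x4 =? 0) && (x1*x5 - x3*x4 =? 0) && (x1*x3 - x2*x5 =? 0) &&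
  (x1*x6 - x3*x5 =? 0) && (x2*x6 - x3^2 =? 0) && (x4*x6 - x5^2 =? 0) &&
  (x1^2 + x1*x4 + x5*x7 =? 0) && (x1*x2 + x1^2 + x3*x7 =? 0) &&
  (x1*x3 + x1*x5 + x6*x7 =? 0).

Definition on_lines (x1 x2 x3 x4 x5 x6 x7 : Z) : bool :=
  ((x1 =? 0) && (x2 =? 0) && (x3 =? 0) && (x5 =? 0) && (x6 =? 0)) ||
  ((x1 =? 0) && (x3 =? 0) && (x4 =? 0) && (x5 =? 0) && (x6 =? 0)) ||
  ((x3 =? 0) && (x5 =? 0) && (x6 =? 0) && (x1 + x4 =? 0) && (x1 + x2 =? 0)).

Definition floorR (B : R) : Z := Int_part B.

(* N_U(B) = #{x in U(Q) : H(x) <= B}: each rational point is counted once via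
   its primitive integer representative whose first nonzero coordinate is > 0;
   H(x) <= B is max |x_i| <= B, i.e. x in [-floor B, floor B]^7. *)
Definition N_U (B : R) : nat :=
  count7 (floorR B) (fun x1 x2 x3 x4 x5 x6 x7 =>
    primitive7 x1 x2 x3 x4 x5 x6 x7 &&
    first_nonzero_pos [x1; x2; x3; x4; x5; x6; x7] &&
    on_S x1 x2 x3 x4 x5 x6 x7 &&
    negb (on_lines x1 x2 x3 x4 x5 x6 x7)).

Definition eqs_M (x1 x2 x3 x4 x5 x6 x7 : Z) : bool :=
  (x1^2 - x2*x4 =? 0) && (x1*x5 - x3*x4 =? 0) && (x1*x3 - x2*x5 =? 0) &&
  (x1*x6 - x3*x5 =? 0) && (x2*x6 - x3^2 =? 0) && (x4*x6 - x5^2 =? 0) &&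
  (x1^2 - x1*x4 + x5*x7 =? 0) && (x1^2 - x1*x2 - x3*x7 =? 0) &&
  (x1*x3 - x1*x5 + x6*x7 =? 0).

(* M(B): all box conditions |x_i| <= B are enforced by the enumeration range;
   the remaining sign/nonvanishing conditions are listed explicitly. *)
Definition M (B : R) : nat :=
  count7 (floorR B) (fun x1 x2 x3 x4 x5 x6 x7 =>
    eqs_M x1 x2 x3 x4 x5 x6 x7 &&
    primitive7 x1 x2 x3 x4 x5 x6 x7 &&
    negb (x1 =? 0) && (0 <? x2) && (0 <? x3) && (0 <? x4) &&
    negb (x5 =? 0) && (0 <? x6)).

(* Sort the primitive representatives of points of U by which of x1,...,x6
   vanish.  If all six are nonzero, the sign symmetries of S do the counting:
   x -> -x and (x3,x5,x7) -> -(x3,x5,x7) preserve S, so the representatives with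
   x1 > 0 are equinumerous with those with x2 > 0 and x3 > 0, and these
   correspond, through (x1,x5,x7) -> -(x1,x5,x7), to the points counted by M,
   because x2 > 0 and x3 > 0 force x4 > 0 and x6 > 0 on S.  If some x_i
   vanishes and x is off the three lines, then x1 = x7 = 0 and x lies on one
   of the conics x4 x6 = x5^2 or x2 x6 = x3^2 in a coordinate plane; their
   primitive points are (u^2, uv, v^2) up to sign, and there are O(B) of them
   of height at most B. *)

From Stdlib Require Import ZArith Reals List.
From Stdlib Require Import Bool Lia Lra Btauto Permutation.
Import ListNotations.
Open Scope Z_scope.

Definition F7 (A : Type) := Z -> Z -> Z -> Z -> Z -> Z -> Z -> A.
Definition P7 := F7 bool.

Definition lsum {A} (l : list A) (f : A -> nat) : nat :=
  fold_right (fun z acc => (f z + acc)%nat) 0%nat l.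

Lemma lsum_ext {A} (l : list A) f g : (forall x, f x = g x) -> lsum l f = lsum l g.
Proof. intros H; induction l; simpl; auto. Qed.

Lemma lsum_add {A} (l : list A) f g :
  lsum l (fun x => (f x + g x)%nat) = (lsum l f + lsum l g)%nat.
Proof. induction l; simpl; auto. rewrite IHl. lia. Qed.

Lemma lsum_app {A} (l1 l2 : list A) f : lsum (l1 ++ l2) f = (lsum l1 f + lsum l2 f)%nat.
Proof. induction l1; simpl; auto. rewrite IHl1. lia. Qed.

Lemma lsum_map {A B} (g : A -> B) l f : lsum (map g l) f = lsum l (fun x => f (g x)).
Proof. induction l; simpl; congruence. Qed.

Lemma lsum_perm {A} (l l' : list A) f : Permutation l l' -> lsum l f = lsum l' f.
Proof. induction 1; simpl; lia. Qed.

Lemma lsum_prod {A B} (l1 : list A) (l2 : list B) (F : A -> B -> nat) :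
  lsum l1 (fun x => lsum l2 (fun y => F x y)) = lsum (list_prod l1 l2) (fun p => F (fst p) (snd p)).
Proof. induction l1; simpl; auto. rewrite lsum_app, lsum_map. simpl. congruence. Qed.

Lemma lsum_indicator {A} (l : list A) (p : A -> bool) :
  lsum l (fun x => if p x then 1%nat else 0%nat) = length (filter p l).
Proof. induction l; simpl; auto. destruct (p a); simpl; lia. Qed.

Lemma NoDup_list_prod {A B} (l1 : list A) (l2 : list B) :
  NoDup l1 -> NoDup l2 -> NoDup (list_prod l1 l2).
Proof.
  intros H1 H2. induction H1; simpl; [constructor|].
  apply NoDup_app; auto.
  - apply FinFun.Injective_map_NoDup; auto. intros a b Hab; congruence.
  - intros [a b] Ha Hb. apply in_map_iff in Ha as [y [Hy _]]. inversion Hy; subst.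
    apply in_prod_iff in Hb. tauto.
Qed.

Lemma in_zrange K z : In z (zrange K) <-> -K <= z <= K.
Proof.
  unfold zrange. rewrite in_map_iff. split.
  - intros [i [<- Hi]]. apply in_seq in Hi. lia.
  - intros H. exists (Z.to_nat (z + K)). split; [lia|]. apply in_seq. lia.
Qed.

Lemma NoDup_zrange K : NoDup (zrange K).
Proof.
  apply FinFun.Injective_map_NoDup; [intros i j H; lia | apply seq_NoDup].
Qed.

Lemma length_zrange K : length (zrange K) = Z.to_nat (2 * K + 1).
Proof. unfold zrange. rewrite length_map, length_seq. reflexivity. Qed.

Lemma sumZ_ext K f g : (forall z, f z = g z) -> sumZ K f = sumZ K g.
Proof. apply lsum_ext. Qed.

Lemma sumZ_add K f g : sumZ K (fun z => (f z + g z)%nat) = (sumZ K f + sumZ K g)%nat.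
Proof. apply lsum_add. Qed.

Lemma sumZ_opp K f : sumZ K f = sumZ K (fun z => f (- z)).
Proof.
  change (lsum (zrange K) f = lsum (zrange K) (fun z => f (- z))).
  rewrite <- (lsum_map Z.opp). apply lsum_perm, NoDup_Permutation.
  - apply NoDup_zrange.
  - apply FinFun.Injective_map_NoDup; [intros a b; lia | apply NoDup_zrange].
  - intro x. rewrite in_map_iff, in_zrange. split.
    + intros H. exists (- x). rewrite in_zrange. split; lia.
    + intros [y [<- Hy]]. rewrite in_zrange in Hy. lia.
Qed.

Definition sign (s : Z) : Prop := s = 1 \/ s = -1.

Lemma sumZ_sign K s f : sign s -> sumZ K f = sumZ K (fun z => f (s * z)).
Proof.
  intros [-> | ->].
  - apply sumZ_ext. intro z. f_equal; lia.
  - rewrite sumZ_opp. apply sumZ_ext. intro z. f_equal; lia.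
Qed.

Lemma count7_ext K (P Q : P7) :
  (forall x1 x2 x3 x4 x5 x6 x7, P x1 x2 x3 x4 x5 x6 x7 = Q x1 x2 x3 x4 x5 x6 x7) ->
  count7 K P = count7 K Q.
Proof. intros H. unfold count7. do 7 (apply sumZ_ext; intro). rewrite H. reflexivity. Qed.

Lemma count7_split K (P Q : P7) :
  count7 K P =
  (count7 K (fun x1 x2 x3 x4 x5 x6 x7 => P x1 x2 x3 x4 x5 x6 x7 && Q x1 x2 x3 x4 x5 x6 x7)
   + count7 K (fun x1 x2 x3 x4 x5 x6 x7 =>
                 P x1 x2 x3 x4 x5 x6 x7 && negb (Q x1 x2 x3 x4 x5 x6 x7)))%nat.
Proof.
  unfold count7. do 7 (rewrite <- sumZ_add; apply sumZ_ext; intro).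
  destruct P, Q; reflexivity.
Qed.

Section SignChange.

Variables s1 s2 s3 s4 s5 s6 s7 : Z.
Hypotheses (hs1 : sign s1) (hs2 : sign s2) (hs3 : sign s3) (hs4 : sign s4)
  (hs5 : sign s5) (hs6 : sign s6) (hs7 : sign s7).

Lemma count7_sign K (P Q : P7) :
  (forall x1 x2 x3 x4 x5 x6 x7,
     P (s1*x1) (s2*x2) (s3*x3) (s4*x4) (s5*x5) (s6*x6) (s7*x7) = Q x1 x2 x3 x4 x5 x6 x7) ->
  count7 K P = count7 K Q.
Proof.
  intros HPQ. unfold count7.
  rewrite (sumZ_sign K s1) by exact hs1. apply sumZ_ext; intro.
  rewrite (sumZ_sign K s2) by exact hs2. apply sumZ_ext; intro.
  rewrite (sumZ_sign K s3) by exact hs3. apply sumZ_ext; intro.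
  rewrite (sumZ_sign K s4) by exact hs4. apply sumZ_ext; intro.
  rewrite (sumZ_sign K s5) by exact hs5. apply sumZ_ext; intro.
  rewrite (sumZ_sign K s6) by exact hs6. apply sumZ_ext; intro.
  rewrite (sumZ_sign K s7) by exact hs7. apply sumZ_ext; intro.
  now rewrite HPQ.
Qed.

(* A sign change preserving [P] and reversing the sign of [c] pairs the points
   of [P] with [c > 0] with those with [c < 0]. *)
Lemma count7_half K (P : P7) (c : F7 Z) :
  (forall x1 x2 x3 x4 x5 x6 x7,
     P (s1*x1) (s2*x2) (s3*x3) (s4*x4) (s5*x5) (s6*x6) (s7*x7) = P x1 x2 x3 x4 x5 x6 x7) ->
  (forall x1 x2 x3 x4 x5 x6 x7,
     c (s1*x1) (s2*x2) (s3*x3) (s4*x4) (s5*x5) (s6*x6) (s7*x7) = - c x1 x2 x3 x4 x5 x6 x7) ->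
  (forall x1 x2 x3 x4 x5 x6 x7,
     P x1 x2 x3 x4 x5 x6 x7 = true -> c x1 x2 x3 x4 x5 x6 x7 <> 0) ->
  count7 K P =
  (2 * count7 K (fun x1 x2 x3 x4 x5 x6 x7 =>
                   P x1 x2 x3 x4 x5 x6 x7 && (0 <? c x1 x2 x3 x4 x5 x6 x7)%Z))%nat.
Proof.
  intros HP Hc Hnz.
  rewrite (count7_split K P (fun x1 x2 x3 x4 x5 x6 x7 => 0 <? c x1 x2 x3 x4 x5 x6 x7)).
  enough (count7 K (fun x1 x2 x3 x4 x5 x6 x7 =>
                      P x1 x2 x3 x4 x5 x6 x7 && negb (0 <? c x1 x2 x3 x4 x5 x6 x7))
          = count7 K (fun x1 x2 x3 x4 x5 x6 x7 =>
                        P x1 x2 x3 x4 x5 x6 x7 && (0 <? c x1 x2 x3 x4 x5 x6 x7))) by lia.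
  apply count7_sign. intros. rewrite HP, Hc.
  specialize (Hnz x1 x2 x3 x4 x5 x6 x7).
  destruct (P x1 x2 x3 x4 x5 x6 x7); [|reflexivity]. simpl.
  specialize (Hnz eq_refl).
  destruct (Z.ltb_spec 0 (- c x1 x2 x3 x4 x5 x6 x7)),
           (Z.ltb_spec 0 (c x1 x2 x3 x4 x5 x6 x7)); auto; lia.
Qed.

End SignChange.

Lemma sign_1 : sign 1. Proof. now left. Qed.
Lemma sign_m1 : sign (-1). Proof. now right. Qed.
Lemma mul_m1_l x : -1 * x = - x. Proof. ring. Qed.

Lemma gcd_sign_l s a b : sign s -> Z.gcd (s * a) b = Z.gcd a b.
Proof. intros [-> | ->]; [now rewrite Z.mul_1_l | now rewrite mul_m1_l, Z.gcd_opp_l]. Qed.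

Lemma gcd_sign_r s a b : sign s -> Z.gcd a (s * b) = Z.gcd a b.
Proof. intros Hs. rewrite Z.gcd_comm, gcd_sign_l, Z.gcd_comm; auto. Qed.

Lemma primitive7_sign s1 s2 s3 s4 s5 s6 s7 x1 x2 x3 x4 x5 x6 x7 :
  sign s1 -> sign s2 -> sign s3 -> sign s4 -> sign s5 -> sign s6 -> sign s7 ->
  primitive7 (s1*x1) (s2*x2) (s3*x3) (s4*x4) (s5*x5) (s6*x6) (s7*x7)
  = primitive7 x1 x2 x3 x4 x5 x6 x7.
Proof. intros. unfold primitive7. now rewrite !gcd_sign_l, gcd_sign_r. Qed.

Lemma eqb0_congr a b : a = b \/ a = - b -> (a =? 0) = (b =? 0).
Proof. intros [-> | ->]; destruct (Z.eqb_spec (- b) 0), (Z.eqb_spec b 0); lia. Qed.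

Lemma eqb0_sign s x : sign s -> (s * x =? 0) = (x =? 0).
Proof. intros [-> | ->]; apply eqb0_congr; [left | right]; ring. Qed.

Ltac eqb0_congr_all :=
  repeat (match goal with |- (_ && _) = (_ && _) => f_equal end);
  apply eqb0_congr; first [left; ring | right; ring].

Lemma on_S_opp x1 x2 x3 x4 x5 x6 x7 :
  on_S (-x1) (-x2) (-x3) (-x4) (-x5) (-x6) (-x7) = on_S x1 x2 x3 x4 x5 x6 x7.
Proof. unfold on_S. eqb0_congr_all. Qed.

Lemma on_S_opp357 x1 x2 x3 x4 x5 x6 x7 :
  on_S x1 x2 (-x3) x4 (-x5) x6 (-x7) = on_S x1 x2 x3 x4 x5 x6 x7.
Proof. unfold on_S. eqb0_congr_all. Qed.

Lemma eqs_M_opp157 x1 x2 x3 x4 x5 x6 x7 :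
  eqs_M (-x1) x2 x3 x4 (-x5) x6 (-x7) = on_S x1 x2 x3 x4 x5 x6 x7.
Proof. unfold on_S, eqs_M. eqb0_congr_all. Qed.

Lemma on_S_spec x1 x2 x3 x4 x5 x6 x7 : on_S x1 x2 x3 x4 x5 x6 x7 = true ->
  x1^2 = x2*x4 /\ x1*x5 = x3*x4 /\ x1*x3 = x2*x5 /\
  x1*x6 = x3*x5 /\ x2*x6 = x3^2 /\ x4*x6 = x5^2 /\
  x1^2 + x1*x4 + x5*x7 = 0 /\ x1*x2 + x1^2 + x3*x7 = 0 /\ x1*x3 + x1*x5 + x6*x7 = 0.
Proof. unfold on_S. rewrite !andb_true_iff, !Z.eqb_eq. lia. Qed.

Definition nonzero6 (x1 x2 x3 x4 x5 x6 : Z) : bool :=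
  negb (x1 =? 0) && negb (x2 =? 0) && negb (x3 =? 0) &&
  negb (x4 =? 0) && negb (x5 =? 0) && negb (x6 =? 0).

Lemma nonzero6_sign s1 s2 s3 s4 s5 s6 x1 x2 x3 x4 x5 x6 :
  sign s1 -> sign s2 -> sign s3 -> sign s4 -> sign s5 -> sign s6 ->
  nonzero6 (s1*x1) (s2*x2) (s3*x3) (s4*x4) (s5*x5) (s6*x6) = nonzero6 x1 x2 x3 x4 x5 x6.
Proof. intros. unfold nonzero6. now rewrite !eqb0_sign. Qed.

Definition N_U_pred : P7 := fun x1 x2 x3 x4 x5 x6 x7 =>
  primitive7 x1 x2 x3 x4 x5 x6 x7 &&
  first_nonzero_pos [x1; x2; x3; x4; x5; x6; x7] &&
  on_S x1 x2 x3 x4 x5 x6 x7 &&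
  negb (on_lines x1 x2 x3 x4 x5 x6 x7).

Definition M_pred : P7 := fun x1 x2 x3 x4 x5 x6 x7 =>
  eqs_M x1 x2 x3 x4 x5 x6 x7 &&
  primitive7 x1 x2 x3 x4 x5 x6 x7 &&
  negb (x1 =? 0) && (0 <? x2) && (0 <? x3) && (0 <? x4) &&
  negb (x5 =? 0) && (0 <? x6).

Definition generic : P7 := fun x1 x2 x3 x4 x5 x6 x7 =>
  primitive7 x1 x2 x3 x4 x5 x6 x7 && on_S x1 x2 x3 x4 x5 x6 x7 &&
  nonzero6 x1 x2 x3 x4 x5 x6.

Definition exceptional : P7 := fun x1 x2 x3 x4 x5 x6 x7 =>
  N_U_pred x1 x2 x3 x4 x5 x6 x7 && negb (nonzero6 x1 x2 x3 x4 x5 x6).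

Lemma generic_opp x1 x2 x3 x4 x5 x6 x7 :
  generic (-1*x1) (-1*x2) (-1*x3) (-1*x4) (-1*x5) (-1*x6) (-1*x7)
  = generic x1 x2 x3 x4 x5 x6 x7.
Proof.
  unfold generic. rewrite primitive7_sign, nonzero6_sign by apply sign_m1.
  now rewrite !mul_m1_l, on_S_opp.
Qed.

Lemma generic_opp357 x1 x2 x3 x4 x5 x6 x7 :
  generic (1*x1) (1*x2) (-1*x3) (1*x4) (-1*x5) (1*x6) (-1*x7)
  = generic x1 x2 x3 x4 x5 x6 x7.
Proof.
  unfold generic.
  rewrite primitive7_sign, nonzero6_sign by (apply sign_1 || apply sign_m1).
  now rewrite !mul_m1_l, !Z.mul_1_l, on_S_opp357.
Qed.

Lemma count_generic_half K (c : F7 Z) :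
  (forall x1 x2 x3 x4 x5 x6 x7,
     c (-1*x1) (-1*x2) (-1*x3) (-1*x4) (-1*x5) (-1*x6) (-1*x7) = - c x1 x2 x3 x4 x5 x6 x7) ->
  (forall x1 x2 x3 x4 x5 x6 x7,
     generic x1 x2 x3 x4 x5 x6 x7 = true -> c x1 x2 x3 x4 x5 x6 x7 <> 0) ->
  count7 K generic =
  (2 * count7 K (fun x1 x2 x3 x4 x5 x6 x7 =>
                   generic x1 x2 x3 x4 x5 x6 x7 && (0 <? c x1 x2 x3 x4 x5 x6 x7)%Z))%nat.
Proof. apply count7_half; try apply sign_m1. apply generic_opp. Qed.

Lemma generic_nonzero x1 x2 x3 x4 x5 x6 x7 : generic x1 x2 x3 x4 x5 x6 x7 = true ->
  x1 <> 0 /\ x2 <> 0 /\ x3 <> 0 /\ x4 <> 0 /\ x5 <> 0 /\ x6 <> 0.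
Proof. unfold generic, nonzero6. rewrite !andb_true_iff, !negb_true_iff, !Z.eqb_neq. tauto. Qed.

Lemma count_generic_x1_pos K :
  count7 K (fun x1 x2 x3 x4 x5 x6 x7 => generic x1 x2 x3 x4 x5 x6 x7 && (0 <? x1))
  = (2 * count7 K (fun x1 x2 x3 x4 x5 x6 x7 =>
                     generic x1 x2 x3 x4 x5 x6 x7 && (0 <? x2)%Z && (0 <? x3)%Z))%nat.
Proof.
  set (pos2 := fun x1 x2 x3 x4 x5 x6 x7 => generic x1 x2 x3 x4 x5 x6 x7 && (0 <? x2)).
  assert (by_x1 := count_generic_half K (fun x1 _ _ _ _ _ _ => x1)).
  assert (by_x2 := count_generic_half K (fun _ x2 _ _ _ _ _ => x2)).
  assert (by_x3 := count7_half 1 1 (-1) 1 (-1) 1 (-1) sign_1 sign_1 sign_m1 sign_1 sign_m1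
    sign_1 sign_m1 K pos2 (fun _ _ x3 _ _ _ _ => x3)).
  cbv beta in by_x1, by_x2, by_x3.
  enough (count7 K generic = 2 * count7 K (fun x1 x2 x3 x4 x5 x6 x7 =>
            generic x1 x2 x3 x4 x5 x6 x7 && (0 <? x1)%Z)
          /\ count7 K generic = 2 * count7 K pos2
          /\ count7 K pos2 = 2 * count7 K (fun x1 x2 x3 x4 x5 x6 x7 =>
               pos2 x1 x2 x3 x4 x5 x6 x7 && (0 <? x3)%Z))%nat by (unfold pos2 in *; lia).
  split; [|split].
  - apply by_x1; [intros; ring | intros * Hg; now apply generic_nonzero in Hg].
  - apply by_x2; [intros; ring | intros * Hg; now apply generic_nonzero in Hg].
  - apply by_x3; unfold pos2.
    + intros. rewrite generic_opp357. now rewrite Z.mul_1_l.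
    + intros; ring.
    + intros * Hg. apply andb_prop in Hg as [Hg _]. now apply generic_nonzero in Hg.
Qed.

Lemma N_U_pred_nonzero x1 x2 x3 x4 x5 x6 x7 :
  N_U_pred x1 x2 x3 x4 x5 x6 x7 && nonzero6 x1 x2 x3 x4 x5 x6
  = generic x1 x2 x3 x4 x5 x6 x7 && (0 <? x1).
Proof.
  unfold N_U_pred, generic, nonzero6, on_lines, first_nonzero_pos.
  destruct (Z.eqb_spec x1 0), (Z.eqb_spec x3 0); simpl; btauto.
Qed.

Lemma M_pred_opp157 x1 x2 x3 x4 x5 x6 x7 :
  M_pred (-1*x1) (1*x2) (1*x3) (1*x4) (-1*x5) (1*x6) (-1*x7)
  = generic x1 x2 x3 x4 x5 x6 x7 && (0 <? x2) && (0 <? x3).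
Proof.
  unfold M_pred, generic, nonzero6.
  rewrite primitive7_sign, !eqb0_sign by (apply sign_1 || apply sign_m1).
  rewrite !mul_m1_l, !Z.mul_1_l, eqs_M_opp157.
  destruct (on_S x1 x2 x3 x4 x5 x6 x7) eqn:HS; [|btauto].
  apply on_S_spec in HS as (_ & _ & _ & _ & E26 & E46 & _).
  destruct (Z.ltb_spec 0 x2), (Z.ltb_spec 0 x3); [|btauto..].
  assert (0 < x6) by nia.
  destruct (Z.ltb_spec 0 x6), (Z.ltb_spec 0 x4), (Z.eqb_spec x2 0), (Z.eqb_spec x3 0),
    (Z.eqb_spec x4 0), (Z.eqb_spec x5 0), (Z.eqb_spec x6 0); try (exfalso; nia); btauto.
Qed.

Lemma count7_N_U_decomposition K :
  count7 K N_U_pred = (2 * count7 K M_pred + count7 K exceptional)%nat.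
Proof.
  rewrite (count7_split K N_U_pred (fun x1 x2 x3 x4 x5 x6 _ => nonzero6 x1 x2 x3 x4 x5 x6)).
  rewrite (count7_ext K _ _ N_U_pred_nonzero), count_generic_x1_pos.
  rewrite (count7_sign (-1) 1 1 1 (-1) 1 (-1) sign_m1 sign_1 sign_1 sign_1 sign_m1 sign_1
             sign_m1 K M_pred _ M_pred_opp157).
  reflexivity.
Qed.

Lemma on_lines_false x1 x2 x3 x4 x5 x6 x7 : on_lines x1 x2 x3 x4 x5 x6 x7 = false ->
  ~ (x1 = 0 /\ x2 = 0 /\ x3 = 0 /\ x5 = 0 /\ x6 = 0) /\
  ~ (x1 = 0 /\ x3 = 0 /\ x4 = 0 /\ x5 = 0 /\ x6 = 0) /\
  ~ (x3 = 0 /\ x5 = 0 /\ x6 = 0 /\ x1 + x4 = 0 /\ x1 + x2 = 0).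
Proof.
  unfold on_lines. intros H. apply not_true_iff_false in H.
  rewrite !orb_true_iff, !andb_true_iff, !Z.eqb_eq in H. tauto.
Qed.

Lemma nonzero6_false x1 x2 x3 x4 x5 x6 : nonzero6 x1 x2 x3 x4 x5 x6 = false ->
  x1 = 0 \/ x2 = 0 \/ x3 = 0 \/ x4 = 0 \/ x5 = 0 \/ x6 = 0.
Proof.
  unfold nonzero6. intros H. apply not_true_iff_false in H.
  rewrite !andb_true_iff, !negb_true_iff, !Z.eqb_neq in H. lia.
Qed.

(* A vanishing coordinate forces a point of S with x1 <> 0 onto the third line. *)
Lemma exceptional_x1 x1 x2 x3 x4 x5 x6 x7 :
  on_S x1 x2 x3 x4 x5 x6 x7 = true -> on_lines x1 x2 x3 x4 x5 x6 x7 = false ->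
  nonzero6 x1 x2 x3 x4 x5 x6 = false -> x1 = 0.
Proof.
  intros HS Hl Hz. apply on_S_spec in HS as (E1 & E2 & E3 & E4 & E5 & E6 & E7 & E8 & E9).
  apply on_lines_false in Hl as (_ & _ & Hl3). apply nonzero6_false in Hz.
  destruct (Z.eq_dec x1 0) as [|n1]; [assumption|exfalso].
  assert (x2 <> 0 /\ x4 <> 0) as [n2 n4] by (split; intro; subst; nia).
  assert (x3 = 0 /\ x5 = 0 /\ x6 = 0) as (-> & -> & ->).
  { destruct Hz as [|[|[|[|[|]]]]]; subst; try contradiction.
    - assert (x5 = 0) by nia. subst. nia.
    - assert (x3 = 0) by nia. subst. nia.
    - assert (x3 = 0) by nia. subst. nia. }
  apply Hl3. repeat split; nia.
Qed.

Lemma exceptional_x1_zero x2 x3 x4 x5 x6 x7 :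
  on_S 0 x2 x3 x4 x5 x6 x7 = true -> on_lines 0 x2 x3 x4 x5 x6 x7 = false ->
  x7 = 0 /\ ((x2 = 0 /\ x3 = 0 /\ x4 * x6 = x5^2) \/ (x4 = 0 /\ x5 = 0 /\ x2 * x6 = x3^2)).
Proof.
  intros HS Hl. apply on_S_spec in HS as (E1 & E2 & E3 & E4 & E5 & E6 & E7 & E8 & E9).
  apply on_lines_false in Hl as (Hl1 & Hl2 & _).
  assert (x2 = 0 \/ x4 = 0) as [-> | ->] by nia.
  - assert (x3 = 0) as -> by nia.
    destruct (Z.eq_dec x7 0) as [|n7]; [lia|].
    exfalso. apply Hl1. repeat split; nia.
  - assert (x5 = 0) as -> by nia.
    destruct (Z.eq_dec x7 0) as [|n7]; [lia|].
    exfalso. apply Hl2. repeat split; nia.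
Qed.

Lemma primitive_conic_param a b c : a * c = b^2 -> Z.gcd a (Z.gcd b c) = 1 ->
  exists e u v, sign e /\ a = e*u*u /\ b = e*u*v /\ c = e*v*v.
Proof.
  intros Heq Hg.
  destruct (Z.eq_dec a 0) as [-> | Ha].
  { assert (b = 0) as -> by nia. rewrite !Z.gcd_0_l, Z.abs_idemp in Hg.
    exists c, 0, 1. unfold sign. lia. }
  set (g := Z.gcd a b).
  assert (Hg0 : g <> 0) by (unfold g; rewrite Z.gcd_eq_0; tauto).
  destruct (Z.gcd_divide_l a b) as [a' Ha'], (Z.gcd_divide_r a b) as [b' Hb'].
  fold g in Ha', Hb'.
  assert (coprime_ab : Z.gcd a' b' = 1).
  { rewrite <- (Z.gcd_div_gcd a b g Hg0 eq_refl), Ha', Hb', !Z.div_mul; auto. }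
  assert (Ha'0 : a' <> 0) by (intros ->; lia).
  assert (Hc : a' * c = g * (b' * b')).
  { apply (Z.mul_reg_l _ _ g); auto. rewrite Ha', Hb' in Heq. nia. }
  (* a' divides g b'^2 and is coprime to b', so g = k a' and then c = k b'^2. *)
  destruct (Z.gauss a' b' g) as [k Hk]; auto.
  { apply (Z.gauss _ b'); auto. exists c. nia. }
  assert (Hk1 : (k | 1)).
  { rewrite <- Hg. apply Z.gcd_greatest; [|apply Z.gcd_greatest].
    - exists (a' * a'). nia.
    - exists (b' * a'). nia.
    - exists (b' * b'). apply (Z.mul_reg_l _ _ a'); auto. nia. }
  exists k, a', b'. split; [now apply Z.divide_1_r|]. repeat split; nia.
Qed.

Definition conic_point_46 (t : Z * Z * Z) : Z * Z * Z * Z * Z * Z * Z :=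
  let '(e, u, v) := t in (0, 0, 0, e*u*u, e*u*v, e*v*v, 0).
Definition conic_point_26 (t : Z * Z * Z) : Z * Z * Z * Z * Z * Z * Z :=
  let '(e, u, v) := t in (0, e*u*u, e*u*v, 0, 0, e*v*v, 0).

Lemma exceptional_param x1 x2 x3 x4 x5 x6 x7 :
  exceptional x1 x2 x3 x4 x5 x6 x7 = true -> exists e u v, sign e /\
  ((x1, x2, x3, x4, x5, x6, x7) = conic_point_46 (e, u, v) \/
   (x1, x2, x3, x4, x5, x6, x7) = conic_point_26 (e, u, v)).
Proof.
  unfold exceptional, N_U_pred. rewrite !andb_true_iff, !negb_true_iff.
  intros ((((Hp & _) & HS) & Hl) & Hz).
  assert (x1 = 0) as -> by exact (exceptional_x1 _ _ _ _ _ _ _ HS Hl Hz).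
  unfold primitive7 in Hp. rewrite Z.eqb_eq, Z.gcd_0_l, Z.abs_eq in Hp by apply Z.gcd_nonneg.
  destruct (exceptional_x1_zero _ _ _ _ _ _ HS Hl)
    as [-> [(-> & -> & Hc) | (-> & -> & Hc)]];
    rewrite ?Z.gcd_0_l, ?Z.gcd_0_r, ?Z.abs_eq, ?Z.gcd_abs_r in Hp
      by apply Z.gcd_nonneg.
  - destruct (primitive_conic_param _ _ _ Hc Hp) as (e & u & v & He & -> & -> & ->).
    exists e, u, v. auto.
  - destruct (primitive_conic_param _ _ _ Hc Hp) as (e & u & v & He & -> & -> & ->).
    exists e, u, v. auto.
Qed.

Definition tuples7 (K : Z) : list (Z * Z * Z * Z * Z * Z * Z) :=
  list_prod (list_prod (list_prod (list_prod (list_prod (list_prod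
    (zrange K) (zrange K)) (zrange K)) (zrange K)) (zrange K)) (zrange K)) (zrange K).

Definition holds7 (P : P7) (t : Z * Z * Z * Z * Z * Z * Z) : bool :=
  let '(x1, x2, x3, x4, x5, x6, x7) := t in P x1 x2 x3 x4 x5 x6 x7.

Lemma count7_filter K P : count7 K P = length (filter (holds7 P) (tuples7 K)).
Proof.
  unfold count7, tuples7. change sumZ with (fun K f => @lsum Z (zrange K) f). cbv beta.
  rewrite !lsum_prod, <- lsum_indicator.
  apply lsum_ext. intros [[[[[[? ?] ?] ?] ?] ?] ?]. reflexivity.
Qed.

Lemma NoDup_tuples7 K : NoDup (tuples7 K).
Proof. unfold tuples7. repeat apply NoDup_list_prod; apply NoDup_zrange. Qed.

Definition conic_params (r : Z) : list (Z * Z * Z) :=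
  list_prod (list_prod [1; -1] (zrange r)) (zrange r).

Lemma in_conic_params K e u v : 0 <= K -> sign e ->
  -K <= e*u*u <= K -> -K <= e*v*v <= K -> In (e, u, v) (conic_params (Z.sqrt K)).
Proof.
  intros HK He Hu Hv. unfold conic_params. rewrite !in_prod_iff, !in_zrange.
  pose proof (Z.sqrt_spec K HK) as Hs. cbv zeta in Hs. unfold Z.succ in Hs.
  destruct He as [-> | ->]; simpl; repeat split; auto; nia.
Qed.

Lemma count7_exceptional_le K : 1 <= K -> Z.of_nat (count7 K exceptional) <= 36 * K.
Proof.
  intros HK. rewrite count7_filter.
  assert (Hincl : (length (filter (holds7 exceptional) (tuples7 K)) <=
     length (map conic_point_46 (conic_params (Z.sqrt K)) ++
             map conic_point_26 (conic_params (Z.sqrt K))))%nat).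
  { apply NoDup_incl_length; [apply NoDup_filter, NoDup_tuples7|].
    intros [[[[[[x1 x2] x3] x4] x5] x6] x7] Hin. apply filter_In in Hin as [Hin Hx].
    unfold tuples7 in Hin. rewrite !in_prod_iff, !in_zrange in Hin.
    destruct (exceptional_param _ _ _ _ _ _ _ Hx) as (e & u & v & He & [Hpt | Hpt]);
      rewrite Hpt; simpl in Hpt; injection Hpt as -> -> -> -> -> -> ->;
      apply in_or_app; [left | right]; apply in_map, in_conic_params; auto; lia. }
  rewrite length_app, !length_map in Hincl. unfold conic_params in Hincl.
  rewrite !length_prod, length_zrange in Hincl. simpl (length [1; -1]) in Hincl.
  pose proof (Z.sqrt_spec K ltac:(lia)) as Hs. cbv zeta in Hs.
  pose proof (Z.sqrt_nonneg K).
  apply Nat2Z.inj_le in Hincl.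
  rewrite !Nat2Z.inj_add, !Nat2Z.inj_mul, Z2Nat.id in Hincl by lia.
  nia.
Qed.

Theorem lemma3p1 :
  exists C : R, forall B : R, (1 <= B)%R ->
    (Rabs (INR (N_U B) - 2 * INR (M B)) <= C * B)%R.
Proof.
  exists 36%R. intros B HB.
  destruct (base_Int_part B) as [HB1 HB2].
  assert (HK : 1 <= floorR B).
  { unfold floorR. assert (0 < Int_part B) by (apply lt_IZR; lra). lia. }
  change (N_U B) with (count7 (floorR B) N_U_pred).
  change (M B) with (count7 (floorR B) M_pred).
  rewrite count7_N_U_decomposition, plus_INR, mult_INR.
  replace (INR 2 * INR (count7 (floorR B) M_pred) + INR (count7 (floorR B) exceptional)
           - 2 * INR (count7 (floorR B) M_pred))%R
    with (INR (count7 (floorR B) exceptional)) by (simpl; ring).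
  rewrite Rabs_pos_eq by apply pos_INR.
  pose proof (IZR_le _ _ (count7_exceptional_le _ HK)) as Hexc.
  rewrite INR_IZR_INZ, mult_IZR in *. unfold floorR in *. lra.
Qed.
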